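(* For $n\ge2$ let $R_n$ be the set of words $\rho$ of length $n$ over the alphabet $\{0,1\}$ such that $\rho$ does not start with $01$, $\rho$ does not end with $10$, and $\rho$ does not contain $101$ as a factor. Then $|R_n|=\Theta(\alpha^n)$, where $\alpha\approx1.755$ is the unique positive root of the polynomial $x^4-x^3-x^2-1$.
   Context: $|R_n|=\Theta(\alpha^n)$ means there exist positive constants $c_1,c_2$ with $c_1\alpha^n\le|R_n|\le c_2\alpha^n$ for all $n\ge2$. *)

(* Words over {0,1} are encoded as n.-tuple bool, with
   false = 0 and true = 1. *)
From mathcomp Require Import all_boot all_order all_algebra.
Set Implicit Arguments. Unset Strict Implicit. Unset Printing Implicit Defensive.
Import Order.TTheory GRing.Theory Num.Theory.

Definition starts01 (s : seq bool) : bool := prefix [:: false; true] s.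
Definition ends10 (s : seq bool) : bool := suffix [:: true; false] s.
Definition has101 (s : seq bool) : bool := infix [:: true; false; true] s.

Definition Rset (n : nat) : {set n.-tuple bool} :=
  [set w : n.-tuple bool | [&& ~~ starts01 w, ~~ ends10 w & ~~ has101 w]].

Local Open Scope ring_scope.
Definition palpha {R : numDomainType} (x : R) : R := x ^+ 4 - x ^+ 3 - x ^+ 2 - 1.

(* Reading a word from the left, the conditions "no factor 101" and "does not
   end with 10" only involve a window of two letters, so the numbers
   [adm_count n a b] of admissible continuations of a prefix ab obey a linear
   recursion in n (a transfer matrix on the four states ab), while "does not
   start with 01" only discards one state.  Eliminating the states gives
   r (n+4) = r (n+3) + r (n+2) + r n for r n = |R_(n+2)|.  Its characteristic
   polynomial x^4 - x^3 - x^2 - 1 = (x + 1)(x^3 - 2x^2 + x - 1) is not the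
   minimal one, but unlike the minimal recurrence this one has nonnegative
   coefficients, so it preserves inequalities between sequences: comparing r
   with c alpha^n on four initial values bounds it for all n. *)

From mathcomp Require Import all_boot all_order all_algebra.
From mathcomp Require Import reals.
From mathcomp Require Import zify.
From mathcomp Require Import ring lra.
Import Order.TTheory GRing.Theory Num.Theory.

Set Implicit Arguments.
Unset Strict Implicit.
Unset Printing Implicit Defensive.

Lemma card_tuple_cons (T : finType) n (P : pred (seq T)) :
  #|[set t : n.+1.-tuple T | P t]| = \sum_(x : T) #|[set t : n.-tuple T | P (x :: t)]|.
Proof.
transitivity (\sum_(x : T) \sum_(t : n.-tuple T | P (x :: t)) 1); last first.
  by apply: eq_bigr => x _; rewrite sum1dep_card.
rewrite -sum1dep_card pair_big_dep.
rewrite (reindex (fun xt : T * n.-tuple T => [tuple of xt.1 :: xt.2])) //=.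
exists (fun t => (thead t, [tuple of behead t])) => [[x t] _ | t _] /=.
  by rewrite theadE; congr pair; apply: val_inj.
by rewrite [t in RHS]tuple_eta.
Qed.

Lemma card_tuple0 (T : finType) (P : pred (seq T)) :
  #|[set t : 0.-tuple T | P t]| = P [::].
Proof.
rewrite -sum1dep_card big_mkcond (big_pred1 [tuple]) => [|t]; last first.
  exact/esym/eqP/tuple0.
by case: (P [::]).
Qed.

Definition nwords n (P : pred (seq bool)) : nat := #|[set t : n.-tuple bool | P t]|.

Lemma nwords0 P : nwords 0 P = P [::].
Proof. exact: card_tuple0. Qed.

Lemma nwordsS n P :
  nwords n.+1 P = (nwords n (fun s => P (true :: s)) + nwords n (fun s => P (false :: s)))%N.
Proof. by rewrite /nwords card_tuple_cons big_bool. Qed.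

Lemma nwords_pred0 n : nwords n pred0 = 0.
Proof. by apply: eq_card0 => t; rewrite inE. Qed.

Lemma eq_nwords {n} P Q : P =1 Q -> nwords n P = nwords n Q.
Proof. by move=> PQ; apply: eq_card => t; rewrite !inE PQ. Qed.

Lemma suffix_consr (T : eqType) (s t : seq T) x :
  (size s <= size t)%N -> suffix s (x :: t) = suffix s t.
Proof. by move=> st; rewrite !suffixE /= subSn. Qed.

Definition admissible (w : seq bool) : bool := ~~ ends10 w && ~~ has101 w.

Lemma admissible_cons a b c w :
  admissible [:: a, b, c & w] = ~~ [&& a, ~~ b & c] && admissible [:: b, c & w].
Proof.
rewrite /admissible /ends10 suffix_consr // /has101 infix_consl negb_or andbCA.
by congr (~~ _ && _); case: a; case: b; case: c; rewrite //= prefix0s.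
Qed.

Definition adm_count n a b : nat := nwords n (fun s => admissible [:: a, b & s]).

Lemma adm_count0 a b : adm_count 0 a b = ~~ (a && ~~ b).
Proof. by rewrite /adm_count nwords0; case: a; case: b. Qed.

Lemma adm_countS n a b : adm_count n.+1 a b =
  (adm_count n b false + (if a && ~~ b then 0 else adm_count n b true))%N.
Proof.
rewrite /adm_count nwordsS addnC; congr addn.
  by apply: eq_nwords => t; rewrite admissible_cons !andbF.
case: ifP => ab; last by apply: eq_nwords => t; rewrite admissible_cons andbT ab.
by rewrite -(nwords_pred0 n); apply: eq_nwords => t; rewrite admissible_cons andbT ab.
Qed.

Lemma Rset_word_cons a b w :
  [&& ~~ starts01 [:: a, b & w], ~~ ends10 [:: a, b & w] & ~~ has101 [:: a, b & w]] =
  ~~ (~~ a && b) && admissible [:: a, b & w].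
Proof. by case: a; case: b; rewrite /starts01 //= prefix0s. Qed.

Lemma card_Rset_adm n :
  #|Rset n.+2| = (adm_count n false false + adm_count n true false + adm_count n true true)%N.
Proof.
rewrite -[LHS]/(nwords n.+2 (fun s => [&& ~~ starts01 s, ~~ ends10 s & ~~ has101 s])).
rewrite !nwordsS !(eq_nwords (Rset_word_cons _ _)) /= nwords_pred0.
by rewrite /adm_count add0n addnC addnA addnAC.
Qed.

Lemma card_Rset_rec n : #|Rset n.+4.+2| = (#|Rset n.+4.+1| + #|Rset n.+4| + #|Rset n.+2|)%N.
Proof. by rewrite !card_Rset_adm !adm_countS /=; lia. Qed.

Lemma card_Rset_small n : (n < 4)%N -> (1 <= #|Rset n.+2| <= 12)%N.
Proof. by case: n => [|[|[|[|]]]] // _; rewrite card_Rset_adm ?adm_countS !adm_count0. Qed.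

Local Open Scope ring_scope.

Section PalphaRecurrence.
Variable R : numDomainType.

Definition palpha_rec (u : nat -> R) : Prop := forall n, u n.+4 = u n.+3 + u n.+2 + u n.

Lemma palpha_recB u w : palpha_rec u -> palpha_rec w -> palpha_rec (fun n => u n - w n).
Proof. by move=> hu hw n; rewrite hu hw; ring. Qed.

Lemma palpha_rec_geometric (c a : R) k : palpha a = 0 -> palpha_rec (fun n => c * a ^+ (k + n)).
Proof.
move=> pa n; rewrite -[LHS]subr0 -(mulr0 (c * a ^+ (k + n))) -pa /palpha !addnS !exprS.
ring.
Qed.

Lemma palpha_rec_ge0 v : palpha_rec v -> (forall n, (n < 4)%N -> 0 <= v n) ->
  forall n, 0 <= v n.
Proof.
move=> hv v0; elim/ltn_ind => n IH; have [/v0 // | n4] := ltnP n 4.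
rewrite -(subnK n4) addn4 hv.
by rewrite !addr_ge0 ?IH //; lia.
Qed.

Lemma palpha_rec_le u w : palpha_rec u -> palpha_rec w ->
  (forall n, (n < 4)%N -> u n <= w n) -> forall n, u n <= w n.
Proof.
move=> hu hw uw n; rewrite -subr_ge0.
by apply: (palpha_rec_ge0 (palpha_recB hw hu)) => m /uw; rewrite subr_ge0.
Qed.

End PalphaRecurrence.

Lemma palpha_pos_root_uniq (R : numDomainType) (a b : R) : 0 < a -> 0 < b ->
  palpha a = 0 -> palpha b = 0 -> a = b.
Proof.
move=> a0 b0 pa pb.
pose P := a ^+ 3 * b ^+ 3 + a ^+ 2 * b ^+ 2 * (a + b) + (a + b) * (a ^+ 2 + b ^+ 2).
have P0 : 0 < P by rewrite /P !(addr_gt0, mulr_gt0, exprn_gt0).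
have : (a - b) * P = b ^+ 4 * palpha a - a ^+ 4 * palpha b by rewrite /P /palpha; ring.
rewrite pa pb !mulr0 subr0 => /eqP; rewrite mulf_eq0 (gt_eqF P0) orbF subr_eq0.
exact/eqP.
Qed.

Lemma palpha_pos_root_gt1 (R : numDomainType) (a : R) : 0 < a -> palpha a = 0 -> 1 < a.
Proof.
move=> a0 pa; have : a ^+ 3 * (a - 1) = a ^+ 2 + 1.
  by apply/eqP; rewrite -subr_eq0 -pa /palpha; apply/eqP; ring.
have : 0 < a ^+ 2 + 1 by rewrite addr_gt0 ?exprn_gt0.
by move=> /[swap] <-; rewrite pmulr_rgt0 ?exprn_gt0 // subr_gt0.
Qed.

Lemma palpha_pos_root_exists (R : rcfType) : exists2 a : R, 0 < a & palpha a = 0.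
Proof.
pose p : {poly R} := 'X^4 - 'X^3 - 'X^2 - 1.
have hp x : p.[x] = palpha x by rewrite /p /palpha !hornerE.
have [x /andP [x0 _] /eqP px] : exists2 x : R, 0 <= x <= 2 & root p x.
  apply: poly_ivt; rewrite ?ler0n // !hp /palpha !expr0n /=.
  have -> : (2 : R) ^+ 4 - 2 ^+ 3 - 2 ^+ 2 - 1 = 3 by rewrite !exprS expr0; ring.
  lra.
rewrite hp in px; exists x => //; rewrite lt_neqAle x0 andbT; apply/eqP => x0'.
by move: px; rewrite -x0' /palpha !expr0n /=; lra.
Qed.

Lemma card_Rset_geometric_bounds (R : numFieldType) (a : R) : 1 < a -> palpha a = 0 ->
  forall n, (2 <= n)%N -> (a ^+ 5)^-1 * a ^+ n <= (#|Rset n|)%:R <= 12 * a ^+ n.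
Proof.
move=> a1 pa; have a5 : 0 < a ^+ 5 by rewrite exprn_gt0 ?(lt_trans ltr01).
pose r m : R := (#|Rset m.+2|)%:R.
have r_rec : palpha_rec r by move=> m; rewrite /r card_Rset_rec !natrD.
have r_small m : (m < 4)%N -> 1 <= r m <= 12.
  by move=> /card_Rset_small; rewrite /r ler1n ler_nat.
have a_small m : (m < 4)%N -> 1 <= a ^+ (2 + m) <= a ^+ 5.
  by move=> m4; rewrite exprn_ege1 ?ler_eXn2l ?(ltW a1) //=; lia.
have lower m : (a ^+ 5)^-1 * a ^+ (2 + m) <= r m.
  apply: (palpha_rec_le (palpha_rec_geometric _ 2 pa) r_rec) => {m} m m4.
  have /andP [r1 _] := r_small m m4; have /andP [_ am] := a_small m m4.
  by rewrite ler_pdivrMl // (le_trans am) // ler_pMr.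
have upper m : r m <= 12 * a ^+ (2 + m).
  apply: (palpha_rec_le r_rec (palpha_rec_geometric _ 2 pa)) => {m} m m4.
  have /andP [_ r12] := r_small m m4; have /andP [am _] := a_small m m4.
  by rewrite (le_trans r12) // ler_pMr ?ltr0n.
by move=> [|[|m]] // _; apply/andP; split; [exact: lower | exact: upper].
Qed.

Theorem lemma8p1 (R : realType) :
  (exists alpha : R, 0 < alpha /\ palpha alpha = 0 /\
     forall beta : R, 0 < beta -> palpha beta = 0 -> beta = alpha) /\
  (forall alpha : R, 0 < alpha -> palpha alpha = 0 ->
     exists c1 c2 : R, 0 < c1 /\ 0 < c2 /\
       forall n : nat, (2 <= n)%N ->
         c1 * alpha ^+ n <= (#|Rset n|)%:R /\ (#|Rset n|)%:R <= c2 * alpha ^+ n).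
Proof.
split.
  have [a a0 pa] := palpha_pos_root_exists R.
  by exists a; do 2!split=> //; move=> b b0 pb; apply: palpha_pos_root_uniq.
move=> a a0 pa; have a1 := palpha_pos_root_gt1 a0 pa.
exists (a ^+ 5)^-1, 12; split; first by rewrite invr_gt0 exprn_gt0.
by split=> // n /(card_Rset_geometric_bounds a1 pa)/andP.
Qed.
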